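(* Let $k\ge 3$, and let $p,q$ be real polynomials with $\deg p=k$, $\deg q=k-1$, whose roots are real, simple and strictly interlacing, $p_1<q_1<p_2<\dots<q_{k-1}<p_k$; let $R=q/p$. Fix $j\in\{1,\dots,k-1\}$ and let $C_j^+$ be the open upper half of the circle having $[p_j,p_{j+1}]$ as a diameter. Then $R$ is injective on $C_j^+$ and $R(C_j^+)\cap\mathbb{R}=\emptyset$; hence $R(C_j^+)\cup\{\infty\}$ is a simple closed loop in $\mathbb{C}P^1$ meeting $\mathbb{R}P^1$ only at $\infty$.
   Context: Here $p_1<\dots<p_k$ are the roots of $p$ and $q_1<\dots<q_{k-1}$ the roots of $q$. *)

(* Complex numbers are modelled by an arbitrary
   numClosedFieldType C (e.g. algC, or the complex numbers); the reals are
   its elements satisfying Num.real. *)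
From HB Require Import structures.
From mathcomp Require Import all_boot all_order all_algebra.
Set Implicit Arguments. Unset Strict Implicit. Unset Printing Implicit Defensive.
Import Order.TTheory GRing.Theory Num.Theory.
Local Open Scope ring_scope.

Definition ratfun (C : numClosedFieldType) (p q : {poly C}) (z : C) : C :=
  q.[z] / p.[z].

Definition upper_semicircle (C : numClosedFieldType) (a b z : C) : bool :=
  (`|z - (a + b) / 2%:R| == (b - a) / 2%:R) && (0 < 'Im z).

From HB Require Import structures.
From mathcomp Require Import all_boot all_order all_algebra.
From mathcomp Require Import ring.
Import Order.TTheory GRing.Theory Num.Theory.
Set Implicit Arguments.
Unset Strict Implicit.
Unset Printing Implicit Defensive.
Local Open Scope ring_scope.

(** Interlacing forces all residues of R = q/p at its poles p_i to have the
    sign of kappa = lc(q)/lc(p), so R z = kappa * sum_i e_i / (z - p_i) with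
    e_i > 0 and kappa real.  Hence Im R z = - kappa Im z sum_i e_i/|z - p_i|^2
    vanishes only on the real line.  If R z = R w with z <> w then
    sum_i e_i / ((z - p_i)(w - p_i)) = 0.  For z, w on the circle with diameter
    [a, b] = [p_j, p_(j+1)], multiplying by (z - a)(w - a) makes the imaginary
    part of the i-th term equal to (a - p_i)(b - p_i) Im((z - a)(w - a)) times
    a positive factor; no pole lies strictly between a and b and, as k >= 3,
    some pole lies outside [a, b], so the imaginary part is positive:
    a contradiction. *)

Section PartialFractions.
Variables (F : fieldType) (n : nat) (x : 'I_n -> F).
Hypothesis x_inj : injective x.

Lemma lagrange_interpolation (q : {poly F}) : (size q <= n)%N ->
  q = \sum_(i < n) (q.[x i] / \prod_(l < n.-1) (x i - x (lift i l)))
        *: \prod_(l < n.-1) ('X - (x (lift i l))%:P).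
Proof.
move=> size_q; set S := \sum_(i < n) _.
have S_x m : S.[x m] = q.[x m].
  rewrite horner_sum (bigD1 m) //= [X in _ + X]big1 ?addr0 => [|i neq_im].
    rewrite hornerZ horner_prod; under [X in _ * X]eq_bigr do rewrite hornerXsubC.
    rewrite divfK //; apply/prodf_neq0 => l _.
    by rewrite subr_eq0 (inj_eq x_inj) neq_lift.
  have [l -> _] := unlift_some neq_im.
  by rewrite hornerZ horner_prod [X in _ * X](bigD1 l) //= hornerXsubC subrr mul0r mulr0.
apply/eqP; rewrite -subr_eq0; apply/eqP/(@roots_geq_poly_eq0 _ _ (codom x)).
- by apply/allP => _ /codomP[m ->]; rewrite /root hornerD hornerN S_x subrr.
- exact/injectiveP.
- rewrite size_codom card_ord (leq_trans (size_polyD _ _)) // size_polyN.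
  rewrite geq_max size_q (leq_trans (size_sum _ _ _)) //; apply/bigmax_leqP => i _.
  rewrite (leq_trans (size_scale_leq _ _)) // size_prod_XsubC.
  by rewrite [index_enum _]unlock -enumT size_enum_ord prednK // (leq_ltn_trans _ (ltn_ord i)).
Qed.

Lemma partial_fraction (q : {poly F}) (z : F) : (size q <= n)%N ->
    (forall i, z != x i) ->
  q.[z] / \prod_(i < n) (z - x i) =
  \sum_(i < n) q.[x i] / \prod_(l < n.-1) (x i - x (lift i l)) / (z - x i).
Proof.
move=> size_q z_x; rewrite {1}(lagrange_interpolation size_q) horner_sum mulr_suml.
apply: eq_bigr => i _; rewrite hornerZ horner_prod (bigD1_ord i) //=.
under [X in _ * X * _]eq_bigr do rewrite hornerXsubC.
set P := \prod_(l < n.-1) (z - _).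
have P_neq0 : P != 0 by apply/prodf_neq0 => l _; rewrite subr_eq0.
by rewrite [(z - x i) * P]mulrC invfM mulrA mulfK.
Qed.

End PartialFractions.

Lemma psumr_gt0 (R : numDomainType) (n : nat) (F : 'I_n -> R) (i0 : 'I_n) :
  (forall i, 0 <= F i) -> 0 < F i0 -> 0 < \sum_i F i.
Proof.
move=> F_ge0 Fi0_gt0; rewrite (bigD1 i0) //= ltr_pwDl //.
by apply: sumr_ge0 => i _.
Qed.

Section RealShift.
Variables (C : numClosedFieldType) (a : C).
Hypothesis a_real : a \is Num.real.

Lemma ReB_real z : 'Re (z - a) = 'Re z - a.
Proof. by rewrite raddfB /= (Creal_ReP _ a_real). Qed.

Lemma ImB_real z : 'Im (z - a) = 'Im z.
Proof. by rewrite raddfB /= (Creal_ImP _ a_real) subr0. Qed.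

Lemma Im_neq0_neq_real z : 'Im z != 0 -> z != a.
Proof. by apply: contraNneq => ->; rewrite (Creal_ImP _ a_real). Qed.

End RealShift.

Section Semicircle.
Variables (C : numClosedFieldType) (a b : C).
Hypotheses (a_real : a \is Num.real) (b_real : b \is Num.real).

Lemma semicircle_eq z : `|z - (a + b) / 2%:R| = (b - a) / 2%:R ->
  ('Re z - a) ^+ 2 + 'Im z ^+ 2 = (b - a) * ('Re z - a).
Proof.
have mid_real : (a + b) / 2%:R \is Num.real by rewrite rpredM ?rpredD ?rpredV ?rpred_nat.
move=> /(congr1 (fun t => t ^+ 2)) /=.
rewrite normC2_Re_Im ReB_real ?ImB_real // => h.
apply/eqP; rewrite -subr_eq0 -(subrr (((b - a) / 2%:R) ^+ 2)) -{1}h; apply/eqP.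
by field.
Qed.

Lemma Im_semicircle_ratio x z w : x \is Num.real ->
  `|z - (a + b) / 2%:R| = (b - a) / 2%:R ->
  `|w - (a + b) / 2%:R| = (b - a) / 2%:R ->
  'Im ((z - a) * (w - a) / ((z - x) * (w - x))) =
  (a - x) * (b - x) * 'Im ((z - a) * (w - a)) / `|(z - x) * (w - x)| ^+ 2.
Proof.
move=> x_real /semicircle_eq z_circ /semicircle_eq w_circ.
rewrite Im_div; congr (_ / _); rewrite !ReM !ImM !ReB_real // !ImB_real //.
apply/eqP; rewrite -subr_eq0; apply/eqP.
transitivity ((a - x) * ('Im w * (('Re z - a) ^+ 2 + 'Im z ^+ 2 - (b - a) * ('Re z - a))
                     + 'Im z * (('Re w - a) ^+ 2 + 'Im w ^+ 2 - (b - a) * ('Re w - a)))).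
  by ring.
by rewrite z_circ w_circ !subrr !mulr0 addr0 mulr0.
Qed.

Hypothesis lt_ab : a < b.

Lemma semicircle_ReB_gt0 z : `|z - (a + b) / 2%:R| = (b - a) / 2%:R ->
  0 < 'Im z -> 0 < 'Re z - a.
Proof.
move=> z_circ Imz_gt0; have : 0 < (b - a) * ('Re z - a).
  rewrite -semicircle_eq // ltr_pwDr ?exprn_gt0 //.
  by rewrite real_exprn_even_ge0 // rpredB // Creal_Re.
by rewrite pmulr_rgt0 // subr_gt0.
Qed.

Lemma Im_semicircle_mul_gt0 z w :
  `|z - (a + b) / 2%:R| = (b - a) / 2%:R -> 0 < 'Im z ->
  `|w - (a + b) / 2%:R| = (b - a) / 2%:R -> 0 < 'Im w ->
  0 < 'Im ((z - a) * (w - a)).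
Proof.
move=> z_circ Imz_gt0 w_circ Imw_gt0.
rewrite ImM !ReB_real // !ImB_real //.
by rewrite addr_gt0 // mulr_gt0 // semicircle_ReB_gt0.
Qed.

End Semicircle.

Section CauchySum.
Variables (C : numClosedFieldType) (n : nat) (x e : 'I_n -> C).
Hypotheses (x_real : forall i, x i \is Num.real) (e_gt0 : forall i, 0 < e i).

Definition cauchy_sum z := \sum_(i < n) e i / (z - x i).

Let e_real i : e i \is Num.real. Proof. exact: gtr0_real. Qed.

Let Im_neq0_subr_neq0 z i : 'Im z != 0 -> z - x i != 0.
Proof. by move=> Imz; rewrite subr_eq0 Im_neq0_neq_real. Qed.

Lemma Im_cauchy_sum z :
  'Im (cauchy_sum z) = - 'Im z * \sum_(i < n) e i / `|z - x i| ^+ 2.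
Proof.
rewrite raddf_sum /= mulr_sumr; apply: eq_bigr => i _.
by rewrite ImMl // ImV ImB_real //; ring.
Qed.

Lemma cauchy_sum_nonreal z : (0 < n)%N -> 'Im z != 0 -> cauchy_sum z \isn't Num.real.
Proof.
move=> n_gt0 Imz; apply/negP => /Creal_ImP/eqP; apply/negP.
rewrite Im_cauchy_sum mulf_eq0 negb_or oppr_eq0 Imz /= gt_eqF //.
apply: (psumr_gt0 (i0 := Ordinal n_gt0)) => [i|].
  by rewrite divr_ge0 ?exprn_ge0 // ltW.
by rewrite divr_gt0 // exprn_gt0 // normr_gt0 Im_neq0_subr_neq0.
Qed.

Lemma cauchy_sumB z w : 'Im z != 0 -> 'Im w != 0 ->
  cauchy_sum z - cauchy_sum w =
  (w - z) * \sum_(i < n) e i / ((z - x i) * (w - x i)).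
Proof.
move=> Imz Imw; rewrite -sumrB mulr_sumr; apply: eq_bigr => i _.
by field; rewrite !Im_neq0_subr_neq0.
Qed.

Lemma cauchy_sum_inj_semicircle a b : a \is Num.real -> b \is Num.real -> a < b ->
  (forall i, 0 <= (a - x i) * (b - x i)) -> (exists i, 0 < (a - x i) * (b - x i)) ->
  {in upper_semicircle a b &, injective cauchy_sum}.
Proof.
move=> a_real b_real lt_ab ab_x [i0 ab_xi0].
move=> z w /andP[/eqP z_circ Imz_gt0] /andP[/eqP w_circ Imw_gt0] eq_zw.
have [Imz Imw] := (lt0r_neq0 Imz_gt0, lt0r_neq0 Imw_gt0).
apply/eqP; apply: contraT => neq_zw.
have S0 : \sum_(i < n) e i / ((z - x i) * (w - x i)) = 0.
  apply/eqP; move: (cauchy_sumB Imz Imw); rewrite eq_zw subrr => /esym/eqP.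
  by rewrite mulf_eq0 subr_eq0 eq_sym (negbTE neq_zw).
have Im_term i : 'Im ((z - a) * (w - a) * (e i / ((z - x i) * (w - x i)))) =
    e i * ((a - x i) * (b - x i) * 'Im ((z - a) * (w - a)) / `|(z - x i) * (w - x i)| ^+ 2).
  by rewrite mulrCA (ImMl (e_real i)) (Im_semicircle_ratio a_real b_real (x_real i) z_circ w_circ).
have Im_zw_gt0 := Im_semicircle_mul_gt0 a_real b_real lt_ab z_circ Imz_gt0 w_circ Imw_gt0.
have : 0 < 'Im ((z - a) * (w - a) * \sum_(i < n) e i / ((z - x i) * (w - x i))).
  rewrite mulr_sumr raddf_sum /=; apply: (psumr_gt0 (i0 := i0)) => [i|]; rewrite Im_term.
    apply: mulr_ge0 (ltW (e_gt0 i)) (divr_ge0 _ (exprn_ge0 _ (normr_ge0 _))).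
    exact: mulr_ge0 (ab_x i) (ltW Im_zw_gt0).
  apply: mulr_gt0 (e_gt0 i0) (divr_gt0 (mulr_gt0 ab_xi0 Im_zw_gt0) _).
  by rewrite exprn_gt0 // normr_gt0 mulf_neq0 ?Im_neq0_subr_neq0.
by rewrite S0 mulr0 raddf0 ltxx.
Qed.

End CauchySum.

Section Interlacing.
Variables (R : numFieldType) (k : nat) (ps qs : seq R).
Hypothesis interlacing : forall i, (i < k.-1)%N -> ps`_i < qs`_i /\ qs`_i < ps`_i.+1.

Lemma interlacing_ps_ltS i : (i.+1 < k)%N -> ps`_i < ps`_i.+1.
Proof. by rewrite -ltn_predRL => /interlacing[/lt_trans]; apply. Qed.

Lemma interlacing_ps_lt i i' : (i < i')%N -> (i' < k)%N -> ps`_i < ps`_i'.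
Proof.
elim: i' => // i' IH; rewrite ltnS leq_eqVlt => /predU1P[-> | lt_ii'] lt_i'k.
  exact: interlacing_ps_ltS.
exact: lt_trans (IH lt_ii' (ltnW lt_i'k)) (interlacing_ps_ltS lt_i'k).
Qed.

Lemma interlacing_ps_le i i' : (i <= i')%N -> (i' < k)%N -> ps`_i <= ps`_i'.
Proof.
by rewrite leq_eqVlt => /predU1P[-> // | lt_ii' lt_i'k]; rewrite ltW ?interlacing_ps_lt.
Qed.

Lemma interlacing_qs_lt_ps l i : (l < i)%N -> (i < k)%N -> qs`_l < ps`_i.
Proof.
move=> lt_li lt_ik; have /interlacing[_ /lt_le_trans] : (l < k.-1)%N.
  by rewrite ltn_predRL (leq_ltn_trans lt_li).
by apply; apply: interlacing_ps_le.
Qed.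

Lemma interlacing_ps_lt_qs i l : (i <= l)%N -> (l < k.-1)%N -> ps`_i < qs`_l.
Proof.
move=> le_il /[dup] lt_lk /interlacing[+ _]; apply: le_lt_trans.
by apply: interlacing_ps_le => //; apply: leq_trans lt_lk (leq_pred k).
Qed.

Lemma interlacing_ps_neq_qs i l : (i < k)%N -> (l < k.-1)%N -> ps`_i != qs`_l.
Proof.
move=> lt_ik lt_lk; have [lt_li | le_il] := ltnP l i.
  by rewrite gt_eqF // interlacing_qs_lt_ps.
by rewrite lt_eqF // interlacing_ps_lt_qs.
Qed.

Lemma interlacing_uniq : size ps = k -> uniq ps.
Proof.
move=> size_ps; apply/(uniqP 0) => i i'; rewrite !inE size_ps => lt_ik lt_i'k.
have [lt_ii' | lt_i'i | //] := ltngtP i i'.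
  by move/eqP; rewrite lt_eqF // interlacing_ps_lt.
by move/eqP; rewrite gt_eqF // interlacing_ps_lt.
Qed.

Lemma interlacing_weight_gt0 (i : 'I_k) :
  0 < \prod_(l < k.-1) ((ps`_i - qs`_l) / (ps`_i - ps`_(lift i l))).
Proof.
apply: prodr_gt0 => l _; rewrite /= /bump; have [le_il | lt_li] := leqP i l.
  rewrite add1n -divrNN divr_gt0 // oppr_gt0 subr_lt0.
    exact: interlacing_ps_lt_qs.
  by apply: interlacing_ps_lt; rewrite // -ltn_predRL.
rewrite add0n divr_gt0 // subr_gt0; first exact: interlacing_qs_lt_ps.
exact: interlacing_ps_lt.
Qed.

Lemma interlacing_consecutive_ge0 j i : (j.+1 < k)%N -> (i < k)%N ->
  0 <= (ps`_j - ps`_i) * (ps`_j.+1 - ps`_i).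
Proof.
move=> lt_jk lt_ik; have [le_ij | lt_ji] := leqP i j.
  by rewrite mulr_ge0 // subr_ge0 interlacing_ps_le // ltnW.
by rewrite mulr_le0 // subr_le0 interlacing_ps_le // ltnW.
Qed.

Lemma interlacing_consecutive_gt0 j : (3 <= k)%N -> (j.+1 < k)%N ->
  exists i : 'I_k, 0 < (ps`_j - ps`_i) * (ps`_j.+1 - ps`_i).
Proof.
move=> k_ge3 lt_jk; have [j0 | j_gt0] := posnP j.
  exists (Ordinal k_ge3); rewrite j0 nmulr_rgt0 ?subr_lt0 interlacing_ps_lt //.
exists (Ordinal (leq_ltn_trans (leq0n j) (ltnW lt_jk))).
by rewrite mulr_gt0 // subr_gt0 interlacing_ps_lt // ltnW.
Qed.

End Interlacing.

Lemma horner_prod_XsubC_nth (R : comNzRingType) (s : seq R) (z : R) :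
  (\prod_(a <- s) ('X - a%:P)).[z] = \prod_(i < size s) (z - s`_i).
Proof.
rewrite horner_prod (big_nth 0) big_mkord.
by apply: eq_bigr => i _; rewrite hornerXsubC.
Qed.

Lemma ratfun_cauchy_sum (C : numClosedFieldType) (k : nat) (p q : {poly C})
    (ps qs : seq C) (z : C) :
  (0 < k)%N -> size ps = k -> size qs = k.-1 -> uniq ps -> p != 0 ->
  p = lead_coef p *: \prod_(a <- ps) ('X - a%:P) ->
  q = lead_coef q *: \prod_(b <- qs) ('X - b%:P) ->
  (forall i : 'I_k, z != ps`_i) ->
  ratfun p q z = lead_coef q / lead_coef p *
    cauchy_sum (fun i : 'I_k => ps`_i)
      (fun i => \prod_(l < k.-1) ((ps`_i - qs`_l) / (ps`_i - ps`_(lift i l)))) z.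
Proof.
move=> k_gt0 size_ps size_qs uniq_ps p_neq0 p_eq q_eq z_ps.
set lp := lead_coef p in p_eq *; set lq := lead_coef q in q_eq *.
have ps_inj : injective (fun i : 'I_k => ps`_i).
  by move=> i i' /eqP; rewrite nth_uniq ?size_ps // => /eqP/val_inj.
have size_q : (size q <= k)%N.
  by rewrite q_eq (leq_trans (size_scale_leq _ _)) // size_prod_XsubC size_qs prednK.
rewrite /ratfun p_eq hornerZ horner_prod_XsubC_nth size_ps invfM mulrCA.
rewrite (partial_fraction ps_inj size_q z_ps) /cauchy_sum !mulr_sumr.
apply: eq_bigr => i _; rewrite q_eq hornerZ horner_prod_XsubC_nth size_qs prodf_div.
by ring.
Qed.

Theorem mainTheorem10 (C : numClosedFieldType) (k : nat) (p q : {poly C})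
    (ps qs : seq C) (j : nat) :
  (3 <= k)%N ->
  p \is a polyOver Num.real -> q \is a polyOver Num.real ->
  size p = k.+1 -> size q = k ->
  size ps = k -> size qs = k.-1 ->
  all (fun x => x \is Num.real) ps -> all (fun x => x \is Num.real) qs ->
  p = lead_coef p *: \prod_(a <- ps) ('X - a%:P) ->
  q = lead_coef q *: \prod_(b <- qs) ('X - b%:P) ->
  (forall i, (i < k.-1)%N -> ps`_i < qs`_i /\ qs`_i < ps`_i.+1) ->
  (* j ranges over {1,...,k-1}, 0-indexed here *)
  (j < k.-1)%N ->
  {in upper_semicircle ps`_j ps`_j.+1 &, injective (ratfun p q)} /\
  (forall z, upper_semicircle ps`_j ps`_j.+1 z -> ratfun p q z \isn't Num.real) /\
  (q.[ps`_j] != 0 /\ q.[ps`_j.+1] != 0).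
Proof.
move=> k_ge3 p_real q_real size_p size_q size_ps size_qs ps_real _ p_eq q_eq
  interlacing lt_jk.
have k_gt0 : (0 < k)%N by apply: leq_trans k_ge3.
have lt_j1k : (j.+1 < k)%N by rewrite -ltn_predRL.
have ps_nth_real i : (i < k)%N -> ps`_i \is Num.real.
  by move=> lt_ik; apply/(all_nthP 0 ps_real); rewrite size_ps.
have p_neq0 : p != 0 by rewrite -size_poly_eq0 size_p.
have q_neq0 : q != 0 by rewrite -size_poly_eq0 size_q -lt0n.
set kappa := lead_coef q / lead_coef p.
have kappa_real : kappa \is Num.real.
  by rewrite rpredM ?rpredV ?(polyOverP p_real) ?(polyOverP q_real).
have kappa_neq0 : kappa != 0 by rewrite mulf_neq0 ?invr_eq0 ?lead_coef_eq0.
pose x (i : 'I_k) := ps`_i.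
pose e (i : 'I_k) := \prod_(l < k.-1) ((ps`_i - qs`_l) / (ps`_i - ps`_(lift i l))).
have x_real i : x i \is Num.real := ps_nth_real i (ltn_ord i).
have e_gt0 : forall i, 0 < e i := interlacing_weight_gt0 interlacing.
have R_eq z : 'Im z != 0 -> ratfun p q z = kappa * cauchy_sum x e z.
  move=> Imz; apply: ratfun_cauchy_sum => // [|i].
    exact: interlacing_uniq interlacing size_ps.
  exact: (Im_neq0_neq_real (x_real i) Imz).
split; [|split].
- move=> z w /[dup] z_semi /andP[_ Imz] /[dup] w_semi /andP[_ Imw].
  rewrite !R_eq ?lt0r_neq0 // => /(mulfI kappa_neq0).
  apply: (cauchy_sum_inj_semicircle x_real e_gt0) z_semi w_semi.
  + exact: ps_nth_real (ltnW lt_j1k).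
  + exact: ps_nth_real lt_j1k.
  + exact: (interlacing_ps_ltS interlacing lt_j1k).
  + by move=> i; apply: (interlacing_consecutive_ge0 interlacing lt_j1k (ltn_ord i)).
  + exact: (interlacing_consecutive_gt0 interlacing k_ge3 lt_j1k).
- move=> z /andP[_ /lt0r_neq0 Imz].
  by rewrite R_eq // realMr // (cauchy_sum_nonreal x_real e_gt0 k_gt0 Imz).
- have q_ps_neq0 i : (i < k)%N -> q.[ps`_i] != 0.
    move=> lt_ik; rewrite q_eq hornerZ horner_prod_XsubC_nth mulf_neq0 ?lead_coef_eq0 //.
    apply/prodf_neq0 => l _.
    by rewrite subr_eq0 (interlacing_ps_neq_qs interlacing) // -size_qs.
  by rewrite !q_ps_neq0 // ltnW.
Qed.
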